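(* Let $m\in\mathbb{Z}_{\ge0}$. In $\mathbb{R}^{2m+6}$ with standard basis $e_0,\ldots,e_{2m+5}$, let $\rho=\frac12\sum_re_r$, $v_S=\sum_{r\in S}e_r$ for $S\subset\{0,\ldots,2m+5\}$ with $|S|=m+1$, and $w_{ij}=\rho-e_i-e_j$. Let $P^{(m)}$ be the convex hull of all $v_S$ and all $w_{ij}$ ($0\le i<j\le 2m+5$); $P_{\rm I}$ the convex hull of all $v_S$; $P_{\rm II}$ the convex hull of the $v_S$ with $S\subset\{1,\ldots,2m+5\}$ and the $w_{0j}$ ($1\le j\le 2m+5$); $P_{\rm III}$ the convex hull of the $v_S$ with $S\subset\{3,\ldots,2m+5\}$ and the $w_{ij}$ ($0\le i<j\le2$). For $\sigma\in S_{2m+6}$ acting by permuting coordinates, write $\sigma(A)=\{\sigma(a):a\in A\}$. Then \[P^{(m)}=P_{\rm I}\cup\bigcup_{\sigma\in S_{2m+6}}\sigma(P_{\rm II})\cup\bigcup_{\sigma\in S_{2m+6}}\sigma(P_{\rm III}).\] *)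

From HB Require Import structures.
From mathcomp Require Import all_boot all_order all_algebra all_fingroup.
Set Implicit Arguments. Unset Strict Implicit. Unset Printing Implicit Defensive.
Import Order.TTheory GRing.Theory Num.Theory.
Local Open Scope ring_scope.

Definition conv_hull (R : realFieldType) (N : nat) (A : 'rV[R]_N -> Prop)
  : 'rV[R]_N -> Prop :=
  fun x => exists (k : nat) (p : 'I_k -> 'rV[R]_N) (l : 'I_k -> R),
    (forall i, A (p i)) /\ (forall i, 0 <= l i) /\
    \sum_i l i = 1 /\ x = \sum_i l i *: p i.

Definition evec (R : realFieldType) (N : nat) (r : 'I_N) : 'rV[R]_N :=
  delta_mx 0 r.

Definition rho (R : realFieldType) (N : nat) : 'rV[R]_N :=
  2^-1 *: \sum_(r < N) evec R r.

Definition vS (R : realFieldType) (N : nat) (S : {set 'I_N}) : 'rV[R]_N :=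
  \sum_(r in S) evec R r.

Definition wij (R : realFieldType) (N : nat) (i j : 'I_N) : 'rV[R]_N :=
  rho R N - evec R i - evec R j.

(* permutation sigma acting on coordinates: sigma(e_r) = e_{sigma r} *)
Definition permv (R : realFieldType) (N : nat) (s : 'S_N) (x : 'rV[R]_N)
  : 'rV[R]_N := \row_j x 0 ((s^-1)%g j).

Definition perm_img (R : realFieldType) (N : nat) (s : 'S_N)
  (A : 'rV[R]_N -> Prop) : 'rV[R]_N -> Prop :=
  fun x => exists2 y, A y & x = permv s y.

Section Gens.
Variables (R : realFieldType) (m : nat).
Local Notation N := (2 * m + 6)%N.

Definition gen_P : 'rV[R]_N -> Prop := fun x =>
  (exists S : {set 'I_N}, #|S| = m.+1 /\ x = vS R S) \/
  (exists i j : 'I_N, (i < j)%N /\ x = wij R i j).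

Definition gen_I : 'rV[R]_N -> Prop := fun x =>
  exists S : {set 'I_N}, #|S| = m.+1 /\ x = vS R S.

Definition gen_II : 'rV[R]_N -> Prop := fun x =>
  (exists S : {set 'I_N}, #|S| = m.+1 /\ (forall r, r \in S -> 1 <= r)%N /\
     x = vS R S) \/
  (exists i j : 'I_N, nat_of_ord i = 0%N /\ (1 <= j)%N /\ x = wij R i j).

Definition gen_III : 'rV[R]_N -> Prop := fun x =>
  (exists S : {set 'I_N}, #|S| = m.+1 /\ (forall r, r \in S -> 3 <= r)%N /\
     x = vS R S) \/
  (exists i j : 'I_N, (i < j)%N /\ (j <= 2)%N /\ x = wij R i j).

Definition P_m := conv_hull gen_P.
Definition P_I := conv_hull gen_I.
Definition P_II := conv_hull gen_II.
Definition P_III := conv_hull gen_III.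
End Gens.

(* Every v_S and w_ij satisfies x_c >= -1/2, x_c <= 1, x_r - x_c <= 1, sum x = m + 1
   and some inequalities on sums of three or four coordinates, hence so does every x in
   P^(m).  Let c be a coordinate where x is minimal.  If x_c >= 0, x lies in the
   hypersimplex {0 <= x <= 1, sum x = m + 1}, whose vertices are the v_S: this is P_I.
   If x_c < 0, write x = u + sum_(r <> c) d_r w_cr with d >= 0 of total weight -2 x_c
   and u in the hypersimplex dilated by 1 + 2 x_c on the coordinates other than c; each
   u_r may range over [max(0, x_r + x_c), 1 + 2 x_c], and the sum of u can be made right
   unless there are a, b with x_a + x_b, x_a + x_c, x_b + x_c all negative.  Then
   x = u - sum (x_i + x_j) w_ij over the pairs ij of {a, b, c}, with u in the hypersimplex
   dilated by 1 + 2 (x_a + x_b + x_c) on the coordinates outside {a, b, c}.  Up to a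
   permutation of coordinates these are the pieces P_II and P_III.
   A point of a hypersimplex with a fractional coordinate has two of them, and moving
   mass between these two in either direction removes one: so the point is a convex
   combination of points with fewer fractional coordinates. *)

From HB Require Import structures.
From mathcomp Require Import all_boot all_order all_algebra all_fingroup.
From mathcomp Require Import ring lra zify.
Set Implicit Arguments. Unset Strict Implicit. Unset Printing Implicit Defensive.
Import Order.TTheory GRing.Theory Num.Theory.
Local Open Scope ring_scope.

Section NonnegativeCombination.
Variables (R : realFieldType) (n : nat).
Implicit Types (A B : 'rV[R]_n -> Prop) (y z : 'rV[R]_n).

Definition nncomb A (s : R) y :=
  exists k (p : 'I_k -> 'rV[R]_n) (l : 'I_k -> R),
    (forall i, A (p i)) /\ (forall i, 0 <= l i) /\
    \sum_i l i = s /\ y = \sum_i l i *: p i.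

Lemma nncomb0 A : nncomb A 0 0.
Proof.
exists 0%N, (fun _ => 0), (fun _ => 0).
by split; [case | split; [case | rewrite !big_ord0]].
Qed.

Lemma nncomb1 A c p : A p -> 0 <= c -> nncomb A c (c *: p).
Proof. by move=> Ap c0; exists 1%N, (fun _ => p), (fun _ => c); rewrite !big_ord1. Qed.

Lemma nncombD A s s' y z : nncomb A s y -> nncomb A s' z -> nncomb A (s + s') (y + z).
Proof.
move=> [k1 [p1 [l1 [Ap1 [l1_ge0 [<- ->]]]]]] [k2 [p2 [l2 [Ap2 [l2_ge0 [<- ->]]]]]].
pose p i := match split i with inl a => p1 a | inr b => p2 b end.
pose l i := match split i with inl a => l1 a | inr b => l2 b end.
exists (k1 + k2)%N, p, l.
split; first by move=> i; rewrite /p; case: split.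
split; first by move=> i; rewrite /l; case: split.
by rewrite !big_split_ord /p /l; split; congr (_ + _);
  apply: eq_bigr => i _; rewrite (unsplitK (inl i), unsplitK (inr i)).
Qed.

Lemma nncombZ A c s y : 0 <= c -> nncomb A s y -> nncomb A (c * s) (c *: y).
Proof.
move=> c0 [k [p [l [Ap [l_ge0 [<- ->]]]]]].
exists k, p, (fun i => c * l i); split => //; split => [i|]; first exact: mulr_ge0.
rewrite mulr_sumr scaler_sumr; split => //.
by apply: eq_bigr => i _; rewrite scalerA.
Qed.

Lemma nncomb_sub A B s y : (forall p, A p -> B p) -> nncomb A s y -> nncomb B s y.
Proof. by move=> AB [k [p [l [Ap H]]]]; exists k, p, l; split => // i; apply: AB. Qed.

Lemma nncomb_sum A (I : finType) (P : pred I) (l : I -> R) (p : I -> 'rV[R]_n) :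
  (forall i, P i -> A (p i)) -> (forall i, P i -> 0 <= l i) ->
  nncomb A (\sum_(i | P i) l i) (\sum_(i | P i) l i *: p i).
Proof.
move=> Ap l_ge0; apply: (big_rec2 (nncomb A)); first exact: nncomb0.
by move=> i s y Pi; apply/nncombD/nncomb1; [apply: Ap | apply: l_ge0].
Qed.

Lemma conv_hull_lb A (phi : 'rV[R]_n -> R) b x :
  (forall a y z, phi (a *: y + z) = a * phi y + phi z) ->
  (forall p, A p -> b <= phi p) -> conv_hull A x -> b <= phi x.
Proof.
move=> phi_lin phi_ge [k [p [l [Ap [l_ge0 [l1 ->]]]]]].
have phi0 : phi 0 = 0.
  by have := phi_lin 1 0 0; rewrite scale1r addr0 mul1r; lra.
have -> : phi (\sum_i l i *: p i) = \sum_i l i * phi (p i).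
  by apply: (big_rec2 (fun y c => phi y = c)) => // i y c _ <-; rewrite phi_lin.
rewrite -[b]mul1r -l1 mulr_suml; apply: ler_sum => i _.
by rewrite ler_wpM2l // phi_ge.
Qed.

Lemma conv_hull_segment A y d e f :
  0 < e -> 0 < f -> conv_hull A (y + e *: d) -> conv_hull A (y - f *: d) -> conv_hull A y.
Proof.
move=> e_gt0 f_gt0 Hp Hm.
have ef_gt0 : 0 < e + f by rewrite addr_gt0.
have := nncombD (nncombZ (divr_ge0 (ltW f_gt0) (ltW ef_gt0)) Hp)
                (nncombZ (divr_ge0 (ltW e_gt0) (ltW ef_gt0)) Hm).
have ef_neq0 : e + f != 0 by rewrite gt_eqF.
have -> : f / (e + f) * 1 + e / (e + f) * 1 = 1 by field.
suff -> : f / (e + f) *: (y + e *: d) + e / (e + f) *: (y - f *: d) = y by [].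
by apply/rowP => q; rewrite !mxE; field.
Qed.

End NonnegativeCombination.

Section Coordinates.
Variables (R : realFieldType) (n : nat).

Lemma evecE (r q : 'I_n) : evec R r 0 q = (q == r)%:R.
Proof. by rewrite /evec mxE eqxx. Qed.

Lemma sum_delta (I : finType) (F : I -> R) (q : I) : \sum_r F r * (r == q)%:R = F q.
Proof.
rewrite (bigD1 q) //= eqxx mulr1 big1 ?addr0 // => r /negbTE->.
by rewrite mulr0.
Qed.

Lemma sum_delta1 (I : finType) (q : I) : \sum_r ((r == q)%:R : R) = 1.
Proof. by rewrite -[RHS](sum_delta (fun=> 1) q); apply: eq_bigr => r _; rewrite mul1r. Qed.

Lemma sum_in (I : finType) (S : {set I}) : \sum_r ((r \in S)%:R : R) = #|S|%:R.
Proof.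
rewrite -sum1_card natr_sum [RHS]big_mkcond.
by apply: eq_bigr => r _; case: (r \in S).
Qed.

Lemma vSE (S : {set 'I_n}) q : vS R S 0 q = (q \in S)%:R.
Proof.
rewrite /vS summxE big_mkcond -[RHS](sum_delta (fun r => (r \in S)%:R) q).
by apply: eq_bigr => r _; rewrite evecE eq_sym; case: (r \in S); rewrite ?mul1r ?mul0r.
Qed.

Lemma rhoE q : rho R n 0 q = 2^-1.
Proof.
rewrite /rho mxE summxE -[RHS]mulr1 -(sum_delta1 q).
by congr (_ * _); apply: eq_bigr => r _; rewrite evecE eq_sym.
Qed.

Lemma wijE (i j q : 'I_n) : wij R i j 0 q = 2^-1 - (q == i)%:R - (q == j)%:R.
Proof. by rewrite /wij !mxE eqxx; have := rhoE q; rewrite /rho mxE => ->. Qed.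

Lemma sum_vS (S : {set 'I_n}) : \sum_r vS R S 0 r = #|S|%:R.
Proof. by under eq_bigr do rewrite vSE; rewrite sum_in. Qed.

Lemma sum_eq_uniq (T : eqType) (s : seq T) (i : T) :
  uniq s -> \sum_(a <- s) ((a == i)%:R : R) = (i \in s)%:R.
Proof. by move=> s_uniq; rewrite -natr_sum -big_mkcond /= sum1_count count_uniq_mem. Qed.

Lemma eq_indicators_le1 (T : eqType) (c i j : T) :
  i != j -> (c == i)%:R + (c == j)%:R <= 1 :> R.
Proof.
move=> ij; have [->|_] := eqVneq c i; first by rewrite (negbTE ij) addr0.
by rewrite add0r; case: (c == j); rewrite ?ler01.
Qed.

Lemma sumr_const_seq (V : nmodType) (T : Type) (s : seq T) (c : V) :
  \sum_(q <- s) c = c *+ size s.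
Proof. by elim: s => [|a s IH]; rewrite ?big_nil ?big_cons ?IH ?mulrS. Qed.

Lemma sum_wij_uniq (i j : 'I_n) (T : seq 'I_n) : uniq T ->
  \sum_(q <- T) wij R i j 0 q = (size T)%:R / 2 - (i \in T)%:R - (j \in T)%:R.
Proof.
move=> T_uniq; under eq_bigr do rewrite wijE.
by rewrite !sumrB !sum_eq_uniq // sumr_const_seq -[2^-1 *+ _]mulr_natr mulrC.
Qed.

Lemma sum_wij_starE (c q : 'I_n) (d : 'I_n -> R) :
  (\sum_(r | r != c) d r *: wij R c r) 0 q =
  (\sum_(r | r != c) d r) * (2^-1 - (q == c)%:R) - (if q == c then 0 else d q).
Proof.
rewrite summxE; under eq_bigr do rewrite mxE wijE mulrBr.
rewrite sumrB -mulr_suml; congr (_ - _).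
have [->|qc] := eqVneq q c; first by rewrite big1 // => r /negbTE rc; rewrite eq_sym rc mulr0.
rewrite (bigD1 q) //= eqxx mulr1 big1 ?addr0 // => r /andP[_ /negbTE rq].
by rewrite eq_sym rq mulr0.
Qed.

Lemma sum_coords_lin (T : seq 'I_n) a (y z : 'rV[R]_n) :
  \sum_(q <- T) (a *: y + z) 0 q = a * \sum_(q <- T) y 0 q + \sum_(q <- T) z 0 q.
Proof. by under eq_bigr do rewrite !mxE; rewrite big_split /= -mulr_sumr. Qed.

Lemma sum_vS_ge0 (T : seq 'I_n) (S : {set 'I_n}) : 0 <= \sum_(q <- T) vS R S 0 q.
Proof. by apply: sumr_ge0 => q _; rewrite vSE ler0n. Qed.

End Coordinates.

Lemma nonfrac_indicator (R : realFieldType) (t : R) :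
  0 <= t <= 1 -> ~~ (0 < t < 1) -> t = (t == 1)%:R.
Proof.
move=> /andP[t_ge0 t_le1]; case: eqP => [//|/eqP t_neq1].
have t_lt1 : t < 1 by rewrite lt_neqAle t_neq1.
by rewrite negb_and -!leNgt /= => /orP[]; lra.
Qed.

Section Hypersimplex.
Variables (R : realFieldType) (n k : nat) (F : pred 'I_n).
Implicit Types (u v : 'rV[R]_n) (a : R).

Definition hs_vertex (p : 'rV[R]_n) :=
  exists S : {set 'I_n}, #|S| = k /\ (forall r, r \in S -> F r) /\ p = vS R S.

(* The hypersimplex of level [k] on the coordinates in [F], dilated by [a]. *)
Definition in_hypersimplex a u :=
  [/\ forall r, 0 <= u 0 r <= a, forall r, ~~ F r -> u 0 r = 0 &
      \sum_r u 0 r = k%:R * a].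

Definition frac_coords u := [set r | 0 < u 0 r < 1].

Lemma hs_integral u : in_hypersimplex 1 u -> frac_coords u = set0 -> hs_vertex u.
Proof.
move=> [u_bd u_F u_sum] frac0; pose S := [set r | u 0 r == 1].
have uE r : u 0 r = (r \in S)%:R.
  rewrite inE; apply: nonfrac_indicator; first exact: u_bd.
  have : r \notin frac_coords u by rewrite frac0 inE.
  by rewrite inE.
exists S; split; last split.
- apply/eqP; rewrite -(eqr_nat R) -sum_in -[X in _ == X]mulr1 -u_sum.
  by apply/eqP/eq_bigr => r _; rewrite uE.
- move=> r; apply: contraTT => /u_F; rewrite uE => /eqP.
  by rewrite pnatr_eq0 eqb0.
- by apply/rowP => q; rewrite vSE uE.
Qed.

Lemma hs_frac_neq u i : in_hypersimplex 1 u -> i \in frac_coords u ->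
  exists2 j, j != i & j \in frac_coords u.
Proof.
move=> [u_bd _ u_sum] i_frac.
case: (pickP [pred j | (j != i) && (j \in frac_coords u)]) => [j /andP[]|none].
  by exists j.
have /andP[ui_gt0 ui_lt1] : 0 < u 0 i < 1 by rewrite inE in i_frac.
pose T := [set r | u 0 r == 1].
have uE r : u 0 r = u 0 i * (r == i)%:R + (r \in T)%:R.
  have [->|ri] := eqVneq r i; first by rewrite inE lt_eqF // mulr1 addr0.
  rewrite mulr0 add0r inE; apply: nonfrac_indicator; first exact: u_bd.
  by have := none r; rewrite /= ri inE => /negbT.
(* [u 0 i] would be the integer [k - #|T|]. *)
have k_eq : k%:R = u 0 i + #|T|%:R :> R.
  rewrite -[LHS]mulr1 -u_sum -sum_in -(sum_delta (fun=> u 0 i) i) -big_split /=.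
  by apply: eq_bigr => r _; rewrite uE.
exfalso; have [kT|Tk] := leqP k #|T|.
  have : k%:R <= #|T|%:R :> R by rewrite ler_nat.
  lra.
have : #|T|%:R + 1 <= k%:R :> R by rewrite natr1 ler_nat.
lra.
Qed.

Lemma hs_shift u i j : i != j -> in_hypersimplex 1 u ->
  i \in frac_coords u -> j \in frac_coords u ->
  let v := u + Num.min (1 - u 0 i) (u 0 j) *: (evec R i - evec R j) in
  in_hypersimplex 1 v /\ frac_coords v \proper frac_coords u.
Proof.
move=> ij [u_bd u_F u_sum]; rewrite !inE => /andP[ui_gt0 ui_lt1] /andP[uj_gt0 uj_lt1].
set e := Num.min _ _ => v.
have vE r : v 0 r = u 0 r + e * ((r == i)%:R - (r == j)%:R).
  by rewrite /v /evec !mxE eqxx.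
have vi : v 0 i = u 0 i + e by rewrite vE eqxx (negbTE ij) subr0 mulr1.
have vj : v 0 j = u 0 j - e by rewrite vE eqxx eq_sym (negbTE ij) sub0r mulrN1.
have vo r : r != i -> r != j -> v 0 r = u 0 r.
  by move=> ri rj; rewrite vE (negbTE ri) (negbTE rj) subrr mulr0 addr0.
have e_gt0 : 0 < e by rewrite lt_min subr_gt0 ui_lt1 uj_gt0.
have e_le1 : e <= 1 - u 0 i by rewrite ge_min lexx.
have e_leuj : e <= u 0 j by rewrite ge_min lexx orbT.
split; first split.
- move=> r; have [->|ri] := eqVneq r i; first by rewrite vi; apply/andP; split; lra.
  have [->|rj] := eqVneq r j; first by rewrite vj; apply/andP; split; lra.
  by rewrite vo // u_bd.
- move=> r /u_F ur0; rewrite vo //; apply/eqP => r_eq.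
    by move: ui_gt0; rewrite -r_eq ur0 ltxx.
  by move: uj_gt0; rewrite -r_eq ur0 ltxx.
- under eq_bigr do rewrite vE.
  by rewrite big_split /= -mulr_sumr sumrB !sum_delta1 subrr mulr0 addr0.
apply/properP; split.
  apply/subsetP => r; rewrite !inE.
  have [->|ri] := eqVneq r i; first by rewrite ui_gt0 ui_lt1.
  have [->|rj] := eqVneq r j; first by rewrite uj_gt0 uj_lt1.
  by rewrite vo.
have [h|h] := leP (1 - u 0 i) (u 0 j); [exists i | exists j]; rewrite !inE.
- by rewrite ui_gt0 ui_lt1.
- by rewrite vi /e (min_l h) addrC subrK ltxx andbF.
- by rewrite uj_gt0 uj_lt1.
- by rewrite vj /e (min_r (ltW h)) subrr ltxx.
Qed.

Lemma hypersimplex_conv u : in_hypersimplex 1 u -> conv_hull hs_vertex u.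
Proof.
have [c] := ubnP #|frac_coords u|; elim: c u => // c IH u frac_lt u_hs.
have [frac0|[i i_frac]] := set_0Vmem (frac_coords u).
  by rewrite -[u]scale1r; apply: nncomb1 ler01; apply: hs_integral.
have [j ji j_frac] := hs_frac_neq u_hs i_frac.
have ij : i != j by rewrite eq_sym.
have [hs_p frac_p] := hs_shift ij u_hs i_frac j_frac.
have [hs_m frac_m] := hs_shift ji u_hs j_frac i_frac.
have IH' v : frac_coords v \proper frac_coords u -> in_hypersimplex 1 v ->
    conv_hull hs_vertex v.
  by move=> /proper_card lt_uv; apply: IH; apply: leq_trans lt_uv _.
rewrite -[evec R j - _]opprB scalerN in hs_m frac_m.
move: i_frac j_frac; rewrite !inE => /andP[ui_gt0 ui_lt1] /andP[uj_gt0 uj_lt1].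
apply: (conv_hull_segment _ _ (IH' _ frac_p hs_p) (IH' _ frac_m hs_m)).
  by rewrite lt_min subr_gt0 ui_lt1 uj_gt0.
by rewrite lt_min subr_gt0 uj_lt1 ui_gt0.
Qed.

Lemma hypersimplex_nncomb a u : 0 <= a -> in_hypersimplex a u -> nncomb hs_vertex a u.
Proof.
move=> a_ge0 [u_bd u_F u_sum]; have [a0|a_neq0] := eqVneq a 0.
  suff -> : u = 0 by rewrite a0; apply: nncomb0.
  by apply/rowP => r; have := u_bd r; rewrite a0 mxE => /andP[]; lra.
have a_gt0 : 0 < a by rewrite lt_def a_neq0.
rewrite -[a]mulr1 -[u](scalerKV a_neq0); apply: nncombZ a_ge0 _.
apply: hypersimplex_conv; split => [r|r /u_F ur0|]; rewrite ?mxE.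
- have /andP[ur_ge0 ur_lea] := u_bd r.
  have ainv_ge0 : 0 <= a^-1 by rewrite invr_ge0 ltW.
  by rewrite mulr_ge0 //= -[X in _ <= X](mulVf a_neq0) ler_wpM2l.
- by rewrite ur0 mulr0.
- under eq_bigr do rewrite mxE.
  by rewrite -mulr_sumr u_sum mulrCA mulVf // mulr1.
Qed.

End Hypersimplex.

Section ValidInequalities.
Variables (R : realFieldType) (m : nat).
Local Notation N := (2 * m + 6)%N.
Local Notation k := m.+1.
Variable x : 'rV[R]_N.
Hypothesis x_Pm : @P_m R m x.

Lemma natr_N : N%:R = 2 * k%:R + 4 :> R.
Proof. by rewrite natrD natrM -addn1 natrD; ring. Qed.

Lemma Pm_lb (phi : 'rV[R]_N -> R) b :
  (forall a y z, phi (a *: y + z) = a * phi y + phi z) ->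
  (forall S : {set 'I_N}, #|S| = k -> b <= phi (vS R S)) ->
  (forall i j : 'I_N, i != j -> b <= phi (wij R i j)) -> b <= phi x.
Proof.
move=> phi_lin phi_vS phi_w; apply: (conv_hull_lb phi_lin _ x_Pm).
move=> p [[S [S_card ->]]|[i [j [ij ->]]]]; first exact: phi_vS.
by apply: phi_w; rewrite neq_ltn ij.
Qed.

Lemma Pm_sum : \sum_r x 0 r = k%:R.
Proof.
have sum_w (i j : 'I_N) : \sum_r wij R i j 0 r = k%:R.
  under eq_bigr do rewrite wijE.
  by rewrite !sumrB !sum_delta1 sumr_const card_ord -[2^-1 *+ _]mulr_natr natr_N; field.
have lin s a (y z : 'rV[R]_N) :
    s * \sum_r (a *: y + z) 0 r = a * (s * \sum_r y 0 r) + s * \sum_r z 0 r.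
  by under eq_bigr do rewrite !mxE; rewrite big_split /= -mulr_sumr; ring.
have ge s : s * k%:R <= s * \sum_r x 0 r.
  by apply: (Pm_lb (lin s)) => [S <-|p q _]; rewrite ?sum_vS ?sum_w.
by have := ge 1; have := ge (-1); lra.
Qed.

Lemma Pm_sum_shift c :
  \sum_(r | r != c) (x 0 r + x 0 c) = k%:R * (1 + 2 * x 0 c) + 2 * x 0 c.
Proof.
rewrite big_split /= sumr_const cardC1 card_ord -[x 0 c *+ _]mulr_natr.
rewrite -subn1 natrB ?addn_gt0 ?orbT //.
by have := Pm_sum; rewrite (bigD1 c) //= natr_N; lra.
Qed.

Lemma Pm_coord_ge c : - 2^-1 <= x 0 c.
Proof.
apply: (Pm_lb (phi := fun y => y 0 c)) => [a y z|S _|i j ij]; rewrite ?vSE ?wijE ?mxE //.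
  by case: (c \in S) => /=; lra.
by have := eq_indicators_le1 R c ij; lra.
Qed.

Lemma Pm_coord_le c : x 0 c <= 1.
Proof.
rewrite -[x 0 c]opprK lerNl.
apply: (Pm_lb (phi := fun y => - y 0 c)) => [a y z|S _|i j ij]; rewrite ?vSE ?wijE ?mxE.
- by ring.
- by case: (c \in S) => /=; lra.
- by case: (c == i); case: (c == j) => /=; lra.
Qed.

Lemma Pm_coord_sub_le r c : x 0 r - x 0 c <= 1.
Proof.
rewrite -lerN2 opprB.
apply: (Pm_lb (phi := fun y => y 0 c - y 0 r)) => [a y z|S _|i j ij]; rewrite ?vSE ?wijE ?mxE.
- by ring.
- by case: (c \in S); case: (r \in S) => /=; lra.
- by have := eq_indicators_le1 R c ij; case: (r == i); case: (r == j) => /=; lra.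
Qed.

Lemma Pm_sum_uniq_ge (T : seq 'I_N) b : uniq T ->
  b <= 0 -> b <= (size T)%:R / 2 - 2 -> b <= \sum_(q <- T) x 0 q.
Proof.
move=> T_uniq b_le0 b_le.
apply: (Pm_lb (phi := fun y => \sum_(q <- T) y 0 q)) => [a y z|S _|i j _].
  exact: sum_coords_lin.
  exact: le_trans b_le0 (sum_vS_ge0 R T S).
by rewrite sum_wij_uniq //; case: (i \in T); case: (j \in T) => /=; lra.
Qed.

Lemma Pm_triple_ge a b c : uniq [:: a; b; c] -> - 2^-1 <= x 0 a + x 0 b + x 0 c.
Proof.
move=> abc; have := Pm_sum_uniq_ge (b := - 2^-1) abc.
by rewrite !big_cons big_nil addr0 addrA; apply=> /=; lra.
Qed.

Lemma Pm_coord_sub_sum_le (T : seq 'I_N) r : uniq T -> (3 <= size T)%N ->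
  x 0 r - \sum_(q <- T) x 0 q <= 1.
Proof.
move=> T_uniq T_ge3; rewrite -lerN2 opprB.
have T3 : 3 <= (size T)%:R :> R by rewrite (ler_nat R 3).
apply: (Pm_lb (phi := fun y => \sum_(q <- T) y 0 q - y 0 r)) => [a y z|S _|i j _].
- by rewrite sum_coords_lin !mxE; ring.
- by have := sum_vS_ge0 R T S; rewrite vSE; case: (r \in S) => /=; lra.
- by rewrite sum_wij_uniq // wijE; case: (i \in T); case: (j \in T);
    case: (r == i); case: (r == j) => /=; lra.
Qed.

Lemma Pm_sum_coord_ge (T : seq 'I_N) c : uniq T -> c \notin T -> (3 <= size T)%N ->
  0 <= \sum_(q <- T) x 0 q + ((size T)%:R - 2) * x 0 c.
Proof.
move=> T_uniq cT T_ge3; have T3 : 3 <= (size T)%:R :> R by rewrite (ler_nat R 3).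
apply: (Pm_lb (phi := fun y => \sum_(q <- T) y 0 q + ((size T)%:R - 2) * y 0 c)).
- by move=> a y z; rewrite sum_coords_lin !mxE; ring.
- move=> S _; have := sum_vS_ge0 R T S; rewrite vSE.
  by case: (c \in S) => /=; rewrite ?mulr0 ?mulr1; lra.
move=> i j ij; rewrite sum_wij_uniq // wijE.
have [ci|ci] := eqVneq c i.
  by subst c; rewrite (negbTE cT) (negbTE ij); case: (j \in T) => /=; lra.
have [cj|cj] := eqVneq c j; first by subst c; rewrite (negbTE cT); case: (i \in T) => /=; lra.
by case: (i \in T); case: (j \in T) => /=; lra.
Qed.

End ValidInequalities.

Lemma interpolate_sum (R : realFieldType) (I : finType) (P : pred I) (lo hi : I -> R) s :
  (forall i, P i -> lo i <= hi i) ->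
  \sum_(i | P i) lo i <= s <= \sum_(i | P i) hi i ->
  exists y : I -> R, (forall i, P i -> lo i <= y i <= hi i) /\ \sum_(i | P i) y i = s.
Proof.
move=> lo_hi /andP[lo_s s_hi]; set D := \sum_(i | P i) hi i - \sum_(i | P i) lo i.
have [D0|D_neq0] := eqVneq D 0.
  exists lo; split=> [i Pi|]; first by rewrite lexx lo_hi.
  by move: D0; rewrite /D; lra.
have D_gt0 : 0 < D by rewrite lt_def D_neq0 subr_ge0 (le_trans lo_s).
pose th := (s - \sum_(i | P i) lo i) / D.
have th_ge0 : 0 <= th.
  by rewrite /th; apply: divr_ge0; [rewrite subr_ge0 | exact: ltW].
have th_le1 : th <= 1.
  by rewrite /th ler_pdivrMr // mul1r /D; lra.
exists (fun i => lo i + th * (hi i - lo i)); split=> [i /lo_hi lohi_i|].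
  by rewrite lerDl mulr_ge0 ?subr_ge0 //= -lerBrDl ler_piMl ?subr_ge0.
by rewrite big_split /= -mulr_sumr sumrB -/D mulfVK // addrC subrK.
Qed.

Section Pieces.
Variables (R : realFieldType) (m : nat).
Local Notation N := (2 * m + 6)%N.
Local Notation k := m.+1.
Implicit Types (x : 'rV[R]_N).

Definition gen_II_at (c : 'I_N) (p : 'rV[R]_N) :=
  (exists S : {set 'I_N}, #|S| = k /\ (forall r, r \in S -> r != c) /\ p = vS R S) \/
  (exists j, j != c /\ p = wij R c j).

Lemma II_fill x c : @P_m R m x ->
  2 * x 0 c <= \sum_(r | r != c) Num.min 0 (x 0 r + x 0 c) ->
  exists y : 'I_N -> R,
    (forall r, r != c -> Num.max 0 (x 0 r + x 0 c) <= y r <= 1 + 2 * x 0 c) /\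
    \sum_(r | r != c) y r = k%:R * (1 + 2 * x 0 c).
Proof.
move=> x_Pm neg_part; set h := 1 + 2 * x 0 c.
have h_ge0 : 0 <= h by have := Pm_coord_ge x_Pm c; rewrite /h; lra.
apply: interpolate_sum => [r _|]; first rewrite ge_max h_ge0 /h.
  by have := Pm_coord_sub_le x_Pm r c; lra.
apply/andP; split.
  under eq_bigr do rewrite maxr_to_min add0r.
  by rewrite sumrB Pm_sum_shift // -/h; lra.
rewrite sumr_const cardC1 card_ord -[h *+ _]mulr_natl.
by apply: ler_wpM2r => //; rewrite ler_nat; lia.
Qed.

(* [x = u + \sum_(r != c) d r *: wij c r], where [u] is the filling [y] padded with
   [u c = 0] and [d r = y r - (x r + x c)]. *)
Lemma conv_II_at x c : @P_m R m x ->
  2 * x 0 c <= \sum_(r | r != c) Num.min 0 (x 0 r + x 0 c) -> conv_hull (gen_II_at c) x.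
Proof.
move=> x_Pm /(II_fill x_Pm) [y [y_bd y_sum]]; set h := 1 + 2 * x 0 c in y_bd y_sum.
have h_ge0 : 0 <= h by have := Pm_coord_ge x_Pm c; rewrite /h; lra.
pose u := \row_r (if r == c then 0 else y r) : 'rV[R]_N.
have u_hs : in_hypersimplex k (fun r => r != c) h u.
  split=> [r|r /negPn/eqP->|]; rewrite ?mxE; first case: eqP => [_|/eqP rc].
  - by rewrite lexx.
  - by have /andP[lo_y ->] := y_bd r rc; rewrite andbT (le_trans _ lo_y) // le_max lexx.
  - by rewrite eqxx.
  rewrite (bigD1 c) //= mxE eqxx add0r -y_sum.
  by apply: eq_bigr => r /negbTE rc; rewrite mxE rc.
pose d r := y r - (x 0 r + x 0 c).
have d_ge0 r : r != c -> 0 <= d r.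
  by move=> /y_bd /andP[lo_y _]; rewrite subr_ge0 (le_trans _ lo_y) // le_max lexx orbT.
have d_sum : \sum_(r | r != c) d r = - (2 * x 0 c).
  by rewrite sumrB y_sum Pm_sum_shift // /h; ring.
have := nncombD (nncomb_sub _ (hypersimplex_nncomb h_ge0 u_hs))
  (nncomb_sum (A := gen_II_at c) (fun r rc => or_intror (ex_intro _ r (conj rc erefl))) d_ge0).
rewrite d_sum /h addrK.
suff -> : u + \sum_(r | r != c) d r *: wij R c r = x.
  by apply=> p [S [S_card [S_F ->]]]; left; exists S.
apply/rowP => q; rewrite !mxE sum_wij_starE d_sum /d.
by have [->|_] := eqVneq q c => /=; lra.
Qed.

Definition gen_III_at (a b c : 'I_N) (p : 'rV[R]_N) :=
  (exists S : {set 'I_N}, #|S| = k /\ (forall r, r \in S -> r \notin [:: a; b; c]) /\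
     p = vS R S) \/
  p = wij R a b \/ p = wij R a c \/ p = wij R b c.

Lemma III_remainder x a b c (s := x 0 a + x 0 b + x 0 c) : @P_m R m x -> uniq [:: a; b; c] ->
  in_hypersimplex k (fun r => r \notin [:: a; b; c]) (1 + 2 * s)
    (\row_r (if r \notin [:: a; b; c] then x 0 r + s else 0)).
Proof.
move=> x_Pm abc; have s_ge := Pm_triple_ge x_Pm abc; rewrite -/s in s_ge.
have sum_abc f : \sum_(q <- [:: a; b; c]) f q = f a + f b + f c :> R.
  by rewrite !big_cons big_nil addr0 addrA.
split=> [r|r /negbNE rT|]; rewrite ?mxE.
- case: ifP => rT; last by rewrite lexx; lra.
  have rabc : uniq [:: r; a; b; c] by rewrite /= rT.
  have : 0 <= (size [:: r; a; b; c])%:R / 2 - 2 :> R by rewrite /=; lra.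
  move/(Pm_sum_uniq_ge x_Pm rabc (lexx 0)); rewrite !big_cons big_nil => ge.
  have := Pm_coord_sub_sum_le x_Pm r abc isT; rewrite sum_abc => le.
  by rewrite /s; apply/andP; split; lra.
- by rewrite rT.
under eq_bigr do rewrite mxE.
have -> : \sum_r (if r \notin [:: a; b; c] then x 0 r + s else 0) =
          \sum_r (x 0 r + s) - \sum_(q <- [:: a; b; c]) (x 0 q + s).
  rewrite [X in _ - X]big_uniq // [X in _ - X]big_mkcond /= -sumrB.
  by apply: eq_bigr => r _; case: (r \in _) => /=; ring.
rewrite big_split /= Pm_sum // sumr_const card_ord -[s *+ _]mulr_natr natr_N sum_abc.
by rewrite /s; ring.
Qed.

Lemma conv_III_at x a b c : @P_m R m x -> uniq [:: a; b; c] ->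
  x 0 a + x 0 b <= 0 -> x 0 a + x 0 c <= 0 -> x 0 b + x 0 c <= 0 ->
  conv_hull (gen_III_at a b c) x.
Proof.
move=> x_Pm abc xab xac xbc; set s := x 0 a + x 0 b + x 0 c.
have [ab ac bc] : [/\ a != b, a != c & b != c].
  by move: abc; rewrite /= !inE negb_or => /andP[/andP[-> ->] /andP[-> _]].
have h_ge0 : 0 <= 1 + 2 * s by have := Pm_triple_ge x_Pm abc; rewrite -/s; lra.
have gen_ab : gen_III_at a b c (wij R a b) by right; left.
have gen_ac : gen_III_at a b c (wij R a c) by right; right; left.
have gen_bc : gen_III_at a b c (wij R b c) by right; right; right.
have opp_ge0 p q : x 0 p + x 0 q <= 0 -> 0 <= - (x 0 p + x 0 q) by rewrite oppr_ge0.
have := nncombD (nncombD (nncombD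
  (nncomb_sub _ (hypersimplex_nncomb h_ge0 (III_remainder x_Pm abc)))
  (nncomb1 gen_ab (opp_ge0 _ _ xab))) (nncomb1 gen_ac (opp_ge0 _ _ xac)))
  (nncomb1 gen_bc (opp_ge0 _ _ xbc)).
have -> : 1 + 2 * s - (x 0 a + x 0 b) - (x 0 a + x 0 c) - (x 0 b + x 0 c) = 1.
  by rewrite /s; ring.
set u := \row__ _.
suff -> : u + - (x 0 a + x 0 b) *: wij R a b + - (x 0 a + x 0 c) *: wij R a c
            + - (x 0 b + x 0 c) *: wij R b c = x.
  by apply=> p [S [S_card [S_T ->]]]; left; exists S.
apply/rowP => q; rewrite !(wijE, mxE) !inE /s.
have [->|qa] := eqVneq q a; first by rewrite (negbTE ab) (negbTE ac) /=; lra.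
have [->|qb] := eqVneq q b; first by rewrite (negbTE bc) /=; lra.
by have [->|qc] := eqVneq q c => /=; lra.
Qed.

End Pieces.

Section PermuteCoordinates.
Variables (R : realFieldType) (n : nat).
Implicit Types (s : 'S_n) (y : 'rV[R]_n) (A B : 'rV[R]_n -> Prop).

Lemma permvK s y : permv s (permv s^-1 y) = y.
Proof. by apply/rowP => q; rewrite !mxE invgK permKV. Qed.

Lemma permv_vS s (S : {set 'I_n}) : permv s (vS R S) = vS R (s @: S).
Proof.
apply/rowP => q; rewrite mxE !vSE.
by rewrite -{2}(permKV s q) mem_imset //; apply: perm_inj.
Qed.

Lemma permv_wij s (i j : 'I_n) : permv s (wij R i j) = wij R (s i) (s j).
Proof.
apply/rowP => q; rewrite mxE !wijE.
have invE z : (s^-1 q == z)%g = (q == s z) by rewrite -(inj_eq (@perm_inj _ s)) permKV.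
by rewrite !invE.
Qed.

Lemma wijC (i j : 'I_n) : wij R i j = wij R j i.
Proof. by apply/rowP => q; rewrite !wijE; ring. Qed.

Lemma conv_hull_permv A B s y : (forall p, A p -> B (permv s p)) ->
  conv_hull A y -> conv_hull B (permv s y).
Proof.
move=> AB [k [p [l [Ap [l_ge0 [l1 ->]]]]]].
exists k, (fun i => permv s (p i)), l; split; first by move=> i; apply: AB.
do 2!split => //.
by apply/rowP => q; rewrite mxE !summxE; apply: eq_bigr => i _; rewrite !mxE.
Qed.

Lemma perm_img_conv_hull A B s y : (forall p, A p -> B (permv s^-1 p)) ->
  conv_hull A y -> perm_img s (conv_hull B) y.
Proof.
by move=> AB Ay; exists (permv s^-1 y); [apply: conv_hull_permv Ay | rewrite permvK].
Qed.

End PermuteCoordinates.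

Lemma exists_perm3 (T : finType) (a b c a' b' c' : T) :
  uniq [:: a; b; c] -> uniq [:: a'; b'; c'] ->
  exists s : {perm T}, [/\ s a = a', s b = b' & s c = c'].
Proof.
rewrite /= !inE !negb_or => /andP[/andP[ab ac] /andP[bc _]] /andP[/andP[ab' ac'] /andP[bc' _]].
pose s1 := tperm a a'; pose s2 := (s1 * tperm (s1 b) b')%g.
pose s3 := (s2 * tperm (s2 c) c')%g.
have s1a : s1 a = a' := tpermL a a'.
have s2a : s2 a = a'.
  have s1b : s1 b != a' by rewrite -s1a (inj_eq perm_inj) eq_sym.
  by rewrite permM s1a tpermD // eq_sym.
have s2b : s2 b = b' by rewrite permM tpermL.
have s2c_a : s2 c != a' by rewrite -s2a (inj_eq perm_inj) eq_sym.
have s2c_b : s2 c != b' by rewrite -s2b (inj_eq perm_inj) eq_sym.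
exists s3; split; rewrite permM ?tpermL //.
  by rewrite s2a tpermD // eq_sym.
by rewrite s2b tpermD // eq_sym.
Qed.

Section Decomposition.
Variables (R : realFieldType) (m : nat).
Local Notation N := (2 * m + 6)%N.
Local Notation k := m.+1.
Implicit Types (x : 'rV[R]_N).

(* [2 * m + 6] is not syntactically a successor, so [ord0] does not apply. *)
Definition o0 : 'I_N := Ordinal (ltn_addl _ (isT : 0 < 6)%N).
Definition o1 : 'I_N := Ordinal (ltn_addl _ (isT : 1 < 6)%N).
Definition o2 : 'I_N := Ordinal (ltn_addl _ (isT : 2 < 6)%N).

Lemma gen_P_permv s p : @gen_P R m p -> gen_P (permv s p).
Proof.
case=> [[S [S_card ->]]|[i [j [ij ->]]]].
  by left; exists (s @: S); rewrite permv_vS card_imset //; apply: perm_inj.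
right; rewrite permv_wij; case: (ltngtP (s i) (s j)) => [lt|gt|eq].
- by exists (s i), (s j).
- by exists (s j), (s i); rewrite wijC.
- by move/val_inj/perm_inj: eq ij => ->; rewrite ltnn.
Qed.

Lemma perm_img_conv_hull_Pm (A : 'rV[R]_N -> Prop) s x :
  (forall p, A p -> @gen_P R m p) -> perm_img s (conv_hull A) x -> P_m x.
Proof.
move=> AP [y Ay ->]; apply: conv_hull_permv Ay => p /AP; exact: gen_P_permv.
Qed.

Lemma P_I_of_nonneg x : @P_m R m x -> (forall r, 0 <= x 0 r) -> P_I x.
Proof.
move=> x_Pm x_ge0; have x_hs : in_hypersimplex k predT 1 x.
  by split=> // [r|]; [rewrite x_ge0 Pm_coord_le | rewrite Pm_sum // mulr1].
apply: nncomb_sub (hypersimplex_conv x_hs) => p [S [S_card [_ ->]]].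
by exists S.
Qed.

Lemma conv_II_at_perm x c : conv_hull (gen_II_at c) x ->
  exists s : 'S_N, perm_img s (@P_II R m) x.
Proof.
move=> x_II; exists (tperm o0 c); apply: (perm_img_conv_hull _ x_II); rewrite tpermV.
set s := tperm o0 c; have sc : s c = o0 := tpermR o0 c.
have s_neq0 r : r != c -> (1 <= s r)%N.
  by move=> rc; rewrite lt0n -[_ == _]/(s r == o0) -sc (inj_eq perm_inj).
move=> _ [[S [S_card [S_c ->]]]|[j [jc ->]]]; rewrite ?permv_vS ?permv_wij.
  left; exists (s @: S); rewrite card_imset; last exact: perm_inj.
  by split=> //; split=> // _ /imsetP[r /S_c /s_neq0 ? ->].
by right; exists o0, (s j); rewrite sc s_neq0.
Qed.

Lemma ord_ge3 (z : 'I_N) : z \notin [:: o0; o1; o2] -> (3 <= z)%N.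
Proof. by rewrite !inE -!val_eqE /=; case: (nat_of_ord z) => [|[|[|]]]. Qed.

Lemma conv_III_at_perm x a b c : uniq [:: a; b; c] ->
  conv_hull (gen_III_at a b c) x -> exists s : 'S_N, perm_img s (@P_III R m) x.
Proof.
move=> abc x_III; have [s [sa sb sc]] := exists_perm3 (isT : uniq [:: o0; o1; o2]) abc.
exists s; apply: (perm_img_conv_hull _ x_III).
have invE r z : (s^-1 r == z)%g = (r == s z) by rewrite -(inj_eq (@perm_inj _ s)) permKV.
have [ia ib ic] : [/\ s^-1 a = o0, s^-1 b = o1 & s^-1 c = o2]%g by rewrite -sa -sb -sc !permK.
move=> _ [[S [S_card [S_abc ->]]]|[->|[->|->]]]; rewrite ?permv_vS ?permv_wij ?ia ?ib ?ic.
- left; exists (s^-1 @: S)%g; rewrite card_imset; last exact: perm_inj.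
  split=> //; split=> // _ /imsetP[r /S_abc r_abc ->]; apply: ord_ge3.
  by apply: contra r_abc; rewrite !inE !invE sa sb sc.
- by right; exists o0, o1.
- by right; exists o0, o2.
- by right; exists o1, o2.
Qed.

Lemma gen_II_P p : @gen_II R m p -> gen_P p.
Proof.
case=> [[S [S_card [_ ->]]]|[i [j [i0 [j1 ->]]]]]; first by left; exists S.
by right; exists i, j; rewrite i0.
Qed.

Lemma gen_III_P p : @gen_III R m p -> gen_P p.
Proof.
case=> [[S [S_card [_ ->]]]|[i [j [ij [_ ->]]]]]; first by left; exists S.
by right; exists i, j.
Qed.

Lemma min_coord_dichotomy x c : @P_m R m x ->
  (forall r, x 0 c <= x 0 r) -> x 0 c < 0 ->
  2 * x 0 c <= \sum_(r | r != c) Num.min 0 (x 0 r + x 0 c) \/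
  exists a b, [/\ uniq [:: a; b; c], x 0 a + x 0 b <= 0, x 0 a + x 0 c <= 0
                & x 0 b + x 0 c <= 0].
Proof.
move=> x_Pm c_min c_neg; set A := [set r | (r != c) && (x 0 r + x 0 c < 0)].
(* [A] indexes the negative terms of the sum; only [#|A| = 2] can break the bound. *)
have -> : \sum_(r | r != c) Num.min 0 (x 0 r + x 0 c) = \sum_(r in A) (x 0 r + x 0 c).
  rewrite big_mkcond [RHS]big_mkcond; apply: eq_bigr => r _; rewrite inE.
  by case: (r != c) => //=; case: ltP.
have [/cards2P[a [b [ab A_ab]]]|A_ne2] := boolP (#|A| == 2).
  have : (a \in A) && (b \in A) by rewrite A_ab !inE !eqxx orbT.
  rewrite !inE => /andP[/andP[ac xac] /andP[bc xbc]].
  have [xab|xab] := lerP 0 (x 0 a + x 0 b).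
    by left; rewrite A_ab big_setU1 ?big_set1 ?inE //=; lra.
  right; exists a, b; split; rewrite ?ltW //=.
  by rewrite !inE negb_or ab ac bc.
left; have [A_ge3|A_le2] := leqP 3 #|A|.
  have c_A : c \notin enum A by rewrite mem_enum inE eqxx.
  have := Pm_sum_coord_ge x_Pm (enum_uniq _) c_A; rewrite -cardE big_enum => /(_ A_ge3).
  by rewrite big_split /= sumr_const -mulr_natr; nra.
have : \sum_(r in A) 2 * x 0 c <= \sum_(r in A) (x 0 r + x 0 c).
  by apply: ler_sum => r _; have := c_min r; lra.
rewrite sumr_const; have : (#|A| = 0 \/ #|A| = 1)%N by lia.
by case=> ->; rewrite ?mulr0n ?mulr1n; lra.
Qed.

End Decomposition.

Theorem proposition5p6 (R : realFieldType) (m : nat) (x : 'rV[R]_(2 * m + 6)) :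
  @P_m R m x <->
  (@P_I R m x \/
   (exists s : 'S_(2 * m + 6), perm_img s (@P_II R m) x) \/
   (exists s : 'S_(2 * m + 6), perm_img s (@P_III R m) x)).
Proof.
split=> [x_Pm|].
  have [c _ c_min] := @arg_minP _ _ _ (@o0 m) predT (fun r => x 0 r) isT.
  have [c_ge0|c_neg] := lerP 0 (x 0 c).
    by left; apply: P_I_of_nonneg => // r; apply: le_trans c_ge0 (c_min r isT).
  right; have [II|[a [b [abc xab xac xbc]]]] :=
    min_coord_dichotomy x_Pm (fun r => c_min r isT) c_neg.
    by left; apply: conv_II_at_perm (conv_II_at x_Pm II).
  by right; apply: conv_III_at_perm abc (conv_III_at x_Pm abc xab xac xbc).
case=> [x_I|[[s x_II]|[s x_III]]].
- by apply: nncomb_sub x_I => p p_I; left.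
- by apply: perm_img_conv_hull_Pm x_II => p /gen_II_P.
- by apply: perm_img_conv_hull_Pm x_III => p /gen_III_P.
Qed.
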